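(* Let $G$ be any finite simple graph, connected or not. Then there exists a connected distance exceptional graph $G''$ containing a copy of $G$ as an induced subgraph. If moreover $G$ is connected and $\iota(G)<\infty$, then $G''$ can be chosen so that this copy is isometric, i.e. $d_{G''}(u,v)=d_G(u,v)$ for all $u,v\in V(G)$.
   Context: For a connected graph $G$ on vertices $v_1,\dots,v_n$, its distance matrix is $D=(d(v_i,v_j))_{i,j=1}^n$, where $d$ is the shortest-path distance; $\vec 1$ denotes the all-ones vector. $G$ is distance exceptional if $D\vec x=\vec 1$ has no solution. A curvature potential is a vector $\vec x$ with $D\vec x=\vec 1$. Curvature index $\iota(G)\in\mathbb{R}\cup\{\infty\}$: if $G$ is distance exceptional or has a curvature potential $\vec x$ with $\vec 1^\top\vec x\neq0$, then $\iota(G)$ is the unique real number with $\{D\vec x:\vec 1^\top\vec x=1\}\cap\mathbb{R}\vec 1=\{\iota(G)\vec 1\}$; otherwise $\iota(G)=\infty$. *)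

From HB Require Import structures.
From mathcomp Require Import all_boot all_order all_algebra.
From mathcomp Require Import Rstruct.
From Stdlib Require Import Reals.
Set Implicit Arguments. Unset Strict Implicit. Unset Printing Implicit Defensive.
Import Order.TTheory GRing.Theory Num.Theory.
Local Open Scope ring_scope.

Definition simple_graph (T : finType) (e : rel T) : Prop :=
  symmetric e /\ irreflexive e.

Definition connected_graph (T : finType) (e : rel T) : Prop :=
  forall u v : T, connect e u v.

Definition walk_n (T : finType) (e : rel T) (n : nat) (u v : T) : bool :=
  [exists p : n.-tuple T, path e u p && (last u p == v)].

(* Shortest-path distance: least n (searched in 0..#|T|-1, which suffices for
   connected graphs since shortest paths are simple) with a walk of length n. *)
Definition gdist (T : finType) (e : rel T) (u v : T) : nat :=
  find (fun n => walk_n e n u v) (iota 0 #|T|).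

Definition distmx (T : finType) (e : rel T) : 'M[R]_#|T| :=
  \matrix_(i, j) (gdist e (enum_val i) (enum_val j))%:R.

Definition curvature_potential (T : finType) (e : rel T) (x : 'cV[R]_#|T|) : Prop :=
  distmx e *m x = const_mx 1.

Definition distance_exceptional (T : finType) (e : rel T) : Prop :=
  ~ exists x : 'cV[R]_#|T|, curvature_potential e x.

(* iota(G) < infinity: by definition, iota(G) is a real number exactly when G is
   distance exceptional or has a curvature potential x with 1^T x <> 0. *)
Definition curvature_index_finite (T : finType) (e : rel T) : Prop :=
  distance_exceptional e \/
  exists x : 'cV[R]_#|T|, curvature_potential e x /\ \sum_i x i 0 != 0.

(* A weight vector [Y] with [Y^T D = 0] and [1^T Y <> 0] rules out [D x = 1], since
   [Y^T D x = 1^T Y].  For an arbitrary graph, gluing a seven-vertex gadget containing a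
   dominating vertex yields such a [Y] supported on the gadget.  For a connected graph with a
   curvature potential [x] of total weight [s <> 0] (the case [iota < oo] that is not already
   distance exceptional), join a vertex [w] to every vertex of a complete multipartite graph.
   Distances in the original graph are preserved, and [x + e_w] extended by constants on the
   multipartite part lies in the left kernel once the part sizes satisfy one linear
   equation; it has integral solutions because [D] is rational, so [s] is rational. *)

From Stdlib Require Import Rdefinitions.
From mathcomp Require Import zify.
From mathcomp Require Import all_boot all_order all_algebra.
From mathcomp Require Import Rstruct.
From mathcomp Require Import ring lra.
Set Implicit Arguments. Unset Strict Implicit. Unset Printing Implicit Defensive.
Import Order.TTheory GRing.Theory Num.Theory.

Section Walks.
Variables (T : finType) (e : rel T).

Lemma walk_nP n u v :
  reflect (exists p : seq T, [/\ size p = n, path e u p & last u p = v])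
          (walk_n e n u v).
Proof.
apply: (iffP existsP) => [[p /andP[hp /eqP hl]]|[p [hs hp hl]]].
  by exists p; rewrite size_tuple.
have hs' : size p == n by rewrite hs.
by exists (Tuple hs'); rewrite /= hp hl eqxx.
Qed.

Lemma walk_n0 u v : walk_n e 0 u v = (u == v).
Proof.
apply/walk_nP/eqP => [[p [hs _ <-]] | <-]; last by exists [::].
by case: p hs.
Qed.

Lemma walk_nS n u v :
  walk_n e n.+1 u v <-> exists2 z, e u z & walk_n e n z v.
Proof.
split.
  case/walk_nP => -[|z p] [] //= [hs] /andP[hz hp] hl.
  by exists z => //; apply/walk_nP; exists p.
case=> z hz /walk_nP [p [hs hp hl]].
by apply/walk_nP; exists (z :: p); rewrite /= hs hz hp.
Qed.

Lemma walk_n1 u v : walk_n e 1 u v = e u v.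
Proof.
apply/idP/idP => [/walk_nS [z hz] | huv]; first by rewrite walk_n0 => /eqP <-.
by apply/walk_nS; exists v; rewrite ?walk_n0.
Qed.

Lemma walk_n_cat m n u z v :
  walk_n e m u z -> walk_n e n z v -> walk_n e (m + n) u v.
Proof.
case/walk_nP => p [hs hp hl] /walk_nP [q [hs' hq hl']].
apply/walk_nP; exists (p ++ q).
by rewrite size_cat hs hs' cat_path hp last_cat hl.
Qed.

Lemma walk_n_connect n u v : walk_n e n u v -> connect e u v.
Proof. by case/walk_nP => p [_ hp <-]; apply/connectP; exists p. Qed.

Lemma gdist_le n u v : walk_n e n u v -> gdist e u v <= n.
Proof.
move=> h; rewrite /gdist; case: (ltnP n #|T|) => hn.
  rewrite leqNgt; apply/negP => /(before_find 0).
  by rewrite nth_iota // add0n h.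
by rewrite (leq_trans (find_size _ _)) // size_iota.
Qed.

(* Shortest walks are paths, so connected vertices are found within the search range. *)
Lemma gdist_walk u v : connect e u v -> walk_n e (gdist e u v) u v.
Proof.
case/connectP => p hp ->; case: (shortenP hp) => p' hp' hu _.
have hs : size p' < #|T|.
  by have := max_card (mem (u :: p')); rewrite (card_uniqP hu).
have hw : walk_n e (size p') u (last u p') by apply/walk_nP; exists p'.
have hlt : gdist e u (last u p') < #|T| by apply: leq_ltn_trans (gdist_le hw) hs.
have := @nth_find _ 0 (fun n => walk_n e n u (last u p')) (iota 0 #|T|).
by rewrite has_find size_iota nth_iota // add0n; apply.
Qed.

Lemma gdist_eq k u v : walk_n e k u v ->
  (forall n, walk_n e n u v -> k <= n) -> gdist e u v = k.
Proof.
move=> hk hmin; apply/eqP; rewrite eqn_leq gdist_le //.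
exact/hmin/gdist_walk/(walk_n_connect hk).
Qed.

Lemma gdist_refl u : gdist e u u = 0.
Proof. by apply: gdist_eq => //; rewrite walk_n0. Qed.

Lemma gdist_adj u v : u != v -> e u v -> gdist e u v = 1.
Proof.
move=> huv he; apply: gdist_eq; first by rewrite walk_n1.
by case=> //; rewrite walk_n0 (negbTE huv).
Qed.

Lemma gdist_common_neighbour z u v : u != v -> ~~ e u v -> e u z -> e z v ->
  gdist e u v = 2.
Proof.
move=> huv he huz hzv; apply: gdist_eq.
  by rewrite -[2]/(1 + 1); apply: (@walk_n_cat _ _ _ z); rewrite walk_n1.
by case=> [|[|//]]; rewrite ?walk_n0 ?walk_n1 ?(negbTE huv) ?(negbTE he).
Qed.

Hypothesis esym : symmetric e.

Lemma walk_n_rev n u v : walk_n e n u v -> walk_n e n v u.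
Proof.
elim: n u => [|n IH] u; first by rewrite !walk_n0 eq_sym.
case/walk_nS => z hz /IH hw; rewrite -addn1; apply: walk_n_cat hw _.
by rewrite walk_n1 esym.
Qed.

Lemma gdist_sym u v : gdist e u v = gdist e v u.
Proof.
by apply: eq_find => n; apply/idP/idP; apply: walk_n_rev.
Qed.

End Walks.

Section Maps.
Variables (T1 T2 : finType) (e1 : rel T1) (e2 : rel T2) (f : T1 -> T2).

Lemma walk_n_map : (forall x y, e1 x y -> e2 (f x) (f y)) ->
  forall n u v, walk_n e1 n u v -> walk_n e2 n (f u) (f v).
Proof.
move=> hf; elim=> [|n IH] u v; first by rewrite !walk_n0 => /eqP ->.
by case/walk_nS => z /hf hz /IH hw; apply/walk_nS; exists (f z).
Qed.

Lemma walk_n_contract :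
  (forall x y, e1 x y -> e2 (f x) (f y) \/ f x = f y) ->
  forall n u v, walk_n e1 n u v -> exists2 m, m <= n & walk_n e2 m (f u) (f v).
Proof.
move=> hf; elim=> [|n IH] u v.
  by rewrite walk_n0 => /eqP ->; exists 0; rewrite ?walk_n0.
case/walk_nS => z /hf [hz|hz] /IH [m hm hw].
  by exists m.+1 => //; apply/walk_nS; exists (f z).
by exists m; [apply: leqW | rewrite hz].
Qed.

End Maps.

Lemma gdist_retract (T1 T2 : finType) (e1 : rel T1) (e2 : rel T2)
  (f : T1 -> T2) (g : T2 -> T1) : (forall x y, e1 x y -> e2 (f x) (f y)) ->
  (forall x y, e2 x y -> e1 (g x) (g y) \/ g x = g y) -> cancel f g ->
  forall u v, connect e1 u v -> gdist e2 (f u) (f v) = gdist e1 u v.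
Proof.
move=> hf hg hfg u v huv; apply: gdist_eq; first exact/walk_n_map/gdist_walk.
move=> n /(walk_n_contract hg) [m hm]; rewrite !hfg => /gdist_le.
by move/leq_trans; apply.
Qed.

Section Dominating.
Variables (T : finType) (e : rel T) (z : T).
Hypotheses (hs : symmetric e) (hz : forall t, t != z -> e z t).

Lemma connected_dominating : connected_graph e.
Proof.
have hc t : connect e z t.
  by case: (eqVneq t z) => [->|/hz hzt]; [exact: connect0 | exact: connect1].
by move=> u v; apply: connect_trans (hc v); rewrite (sym_connect_sym hs).
Qed.

Lemma gdist_dominating u v :
  gdist e u v = if u == v then 0 else if e u v then 1 else 2.
Proof.
case: (eqVneq u v) => [<-|huv]; first exact: gdist_refl.
case: ifP => he; first exact: gdist_adj.
have hu : u != z by apply: contraFneq _ he => huz; rewrite huz hz // eq_sym -huz.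
have hv : v != z by apply: contraFneq _ he => hvz; rewrite hvz hs hz // -hvz.
apply: (gdist_common_neighbour (z := z)) => //; first by rewrite he.
  by rewrite hs hz.
by rewrite hz.
Qed.

End Dominating.

Local Open Scope ring_scope.

Section Potentials.
Variables (T : finType) (e : rel T).

Lemma distance_exceptional_from_kernel (Y : T -> R) :
  (forall v, \sum_t Y t * (gdist e t v)%:R = 0) -> \sum_t Y t != 0 ->
  distance_exceptional e.
Proof.
move=> hY hYsum [x hx]; move: hYsum.
have -> : \sum_t Y t = \sum_(i < #|T|) Y (enum_val i) * (distmx e *m x) i 0.
  by rewrite hx (big_enum_val (A := T)); apply: eq_bigr => i _; rewrite mxE mulr1.
under eq_bigr do rewrite mxE big_distrr /=.
rewrite exchange_big big1 ?eqxx // => j _.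
under eq_bigr do rewrite mxE mulrA.
rewrite -big_distrl /=.
by rewrite -(big_enum_val (A := T) (fun t => Y t * (gdist e t (enum_val j))%:R)) hY mul0r.
Qed.

Lemma curvature_potentialE (x : 'cV[R]_#|T|) : curvature_potential e x ->
  forall u, \sum_t (gdist e u t)%:R * x (enum_rank t) 0 = 1.
Proof.
move=> hx u; have := congr1 (fun M : 'cV[R]_#|T| => M (enum_rank u) 0) hx.
rewrite /= !mxE => h; rewrite -[RHS]h (big_enum_val (A := T)) /=.
by apply: eq_bigr => i _; rewrite enum_valK mxE enum_rankK.
Qed.

Lemma sum_enum_rank (x : 'cV[R]_#|T|) : \sum_t x (enum_rank t) 0 = \sum_i x i 0.
Proof. by rewrite (big_enum_val (A := T)); apply: eq_bigr => i _; rewrite enum_valK. Qed.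

(* The all-ones row lies in the row space of the rational matrix [D = D^T], hence is
   [y D] for a rational [y], and [1^T x = y D x = y 1]. *)
Lemma curvature_potential_sum_rat (x : 'cV[R]_#|T|) : symmetric e ->
  curvature_potential e x -> exists q : rat, \sum_i x i 0 = ratr q.
Proof.
move=> hsym hx.
pose DQ : 'M[rat]_#|T| := \matrix_(i, j) (gdist e (enum_val i) (enum_val j))%:R.
have hD : map_mx ratr DQ = distmx e by apply/matrixP => i j; rewrite !mxE ratr_nat.
have hDt : (distmx e)^T = distmx e.
  by apply/matrixP => i j; rewrite !mxE gdist_sym.
have h1 : map_mx ratr (const_mx 1 : 'rV[rat]_#|T|) = const_mx 1 :> 'rV[R]_#|T|.
  by apply/matrixP => i j; rewrite !mxE rmorph1.
have /submxP [y hy] : ((const_mx 1 : 'rV[rat]_#|T|) <= DQ)%MS.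
  rewrite -(map_submx (ratr : rat -> R)) h1 hD; apply/submxP; exists x^T.
  by rewrite -[in RHS]hDt -trmx_mul hx trmx_const.
exists (\sum_i y 0 i).
have -> : \sum_i x i 0 = (const_mx 1 *m x : 'M[R]_1) 0 0.
  by rewrite mxE; apply: eq_bigr => i _; rewrite mxE mul1r.
rewrite -h1 hy map_mxM hD -mulmxA hx mxE rmorph_sum.
by apply: eq_bigr => i _; rewrite !mxE mulr1.
Qed.

End Potentials.

(* A seven-vertex gadget: vertices [0, 1, 2] are adjacent to everything, [3, 4] to the
   graph and to [0, 1, 2], and [5, 6] only to [0, 1, 2].  The weights [1] on [0, 1, 2] and
   [-1/2] on the rest of the gadget (and [0] on the graph) annihilate the distance matrix. *)
Definition gadget_class (k : nat) : nat := if (k < 3)%N then 0 else if (k < 5)%N then 1 else 2.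

Definition gadget_adj (k k' : nat) : bool :=
  (k != k') && ((gadget_class k == 0)%N || (gadget_class k' == 0)%N).

Definition gadget_dist (k k' : nat) : nat :=
  if k == k' then 0 else if gadget_adj k k' then 1 else 2.

Definition gadget_weight (k : nat) : R := (if gadget_class k == 0%N then 1 else - (1 / 2))%R.

Lemma gadget_weight_sum : \sum_(k < 7) gadget_weight k = 1.
Proof. rewrite !big_ord_recr big_ord0 /= /gadget_weight /gadget_class /=; lra. Qed.

Lemma gadget_kernel_outer :
  \sum_(k < 7) gadget_weight k * (if (gadget_class k < 2)%N then 1 else 2)%:R = 0.
Proof. rewrite !big_ord_recr big_ord0 /= /gadget_weight /gadget_class /=; lra. Qed.

Lemma gadget_kernel_inner k' : (k' < 7)%N ->
  \sum_(k < 7) gadget_weight k * (gadget_dist k k')%:R = 0.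
Proof.
rewrite !big_ord_recr big_ord0 /=.
by case: k' => [|[|[|[|[|[|[|//]]]]]]] _;
  rewrite /gadget_weight /gadget_dist /gadget_adj /gadget_class /=; lra.
Qed.

Section Gadget.
Variables (T : finType) (e : rel T).
Hypotheses (hs : symmetric e) (hi : irreflexive e).

Definition gadget_graph : rel (T + 'I_7) := fun a b =>
  match a, b with
  | inl u, inl v => e u v
  | inl _, inr k | inr k, inl _ => (gadget_class k < 2)%N
  | inr k, inr k' => gadget_adj k k'
  end.

Lemma gadget_graph_sym : symmetric gadget_graph.
Proof. by move=> [a|a] [b|b] //=; rewrite /gadget_adj eq_sym orbC. Qed.

Lemma gadget_graph_irr : irreflexive gadget_graph.
Proof. by move=> [a|a] /=; rewrite ?hi // /gadget_adj eqxx. Qed.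

Lemma gadget_graph_dominating t : t != inr ord0 -> gadget_graph (inr ord0) t.
Proof.
case: t => [//|k] hk; apply/andP; split => //.
by apply: contraNneq hk => /val_inj <-.
Qed.

Lemma gadget_graph_connected : connected_graph gadget_graph.
Proof.
exact: connected_dominating gadget_graph_sym gadget_graph_dominating.
Qed.

Lemma gadget_graph_exceptional : distance_exceptional gadget_graph.
Proof.
pose Y (t : T + 'I_7) := if t is inr k then gadget_weight k else 0.
have hd := gdist_dominating gadget_graph_sym gadget_graph_dominating.
apply: (distance_exceptional_from_kernel (Y := Y)); last first.
  by rewrite big_sumType /= big1 // add0r gadget_weight_sum oner_neq0.
move=> v; rewrite big_sumType /= big1 ?add0r => [|u _]; last by rewrite mul0r.
case: v => [u|k'].
  rewrite -[RHS]gadget_kernel_outer; apply: eq_bigr => k _.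
  by rewrite hd.
rewrite -[RHS](gadget_kernel_inner (ltn_ord k')); apply: eq_bigr => k _.
by rewrite hd /gadget_dist /= (inj_eq inr_inj).
Qed.

End Gadget.

Lemma sumr_mul_eq (I : finType) (F : I -> R) (j : I) :
  \sum_i F i * (i == j)%:R = F j.
Proof.
rewrite (bigD1 j) //= eqxx mulr1 big1 ?addr0 // => i /negbTE ->.
by rewrite mulr0.
Qed.

Section Attach.
Variables (T : finType) (e : rel T) (w : T) (N c m : nat).
Hypotheses (hs : symmetric e) (hi : irreflexive e) (hc : connected_graph e).

(* [attach_graph] joins [w] to every vertex of the complete multipartite graph with [N]
   singleton parts and [c] parts of size [m]. *)
Definition multipartite_vertex := ('I_N + 'I_c * 'I_m)%type.

Definition multipartite_part (h : multipartite_vertex) : nat :=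
  match h with inl i => i | inr p => N + p.1 end.

Definition attach_graph : rel (T + multipartite_vertex) := fun a b =>
  match a, b with
  | inl u, inl v => e u v
  | inl u, inr _ | inr _, inl u => u == w
  | inr h, inr h' => multipartite_part h != multipartite_part h'
  end.

Definition attach_proj (t : T + multipartite_vertex) : T :=
  if t is inl u then u else w.

Lemma attach_graph_sym : symmetric attach_graph.
Proof. by move=> [a|a] [b|b] //=; rewrite ?hs // eq_sym. Qed.

Lemma attach_graph_irr : irreflexive attach_graph.
Proof. by move=> [a|a] /=; rewrite ?hi ?eqxx. Qed.

Lemma attach_proj_contract x y : attach_graph x y ->
  e (attach_proj x) (attach_proj y) \/ attach_proj x = attach_proj y.
Proof. by case: x y => [a|a] [b|b] /=; [left | move/eqP ->; right..| right]. Qed.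

Lemma attach_graph_connected : connected_graph attach_graph.
Proof.
have hw t : connect attach_graph t (inl w).
  case: t => [u|h]; last by apply: connect1; rewrite /= eqxx.
  have /(walk_n_map (e2 := attach_graph) (f := inl)) hw := gdist_walk (hc u w).
  exact: walk_n_connect (hw _).
by move=> u v; apply: connect_trans (hw u) _; rewrite (sym_connect_sym attach_graph_sym).
Qed.

Lemma gdist_attach_inl u v : gdist attach_graph (inl u) (inl v) = gdist e u v.
Proof.
exact: (gdist_retract (g := attach_proj)) attach_proj_contract _ _ _ (hc u v).
Qed.

(* Every walk leaving the multipartite part passes through [w]. *)
Lemma gdist_attach_inr_inl h u :
  gdist attach_graph (inr h) (inl u) = (gdist e w u).+1.
Proof.
apply: gdist_eq.
  apply/walk_nS; exists (inl w); first by rewrite /= eqxx.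
  exact/walk_n_map/gdist_walk.
case=> [|n /walk_nS [z hz hw]]; first by rewrite walk_n0.
have hzw : attach_proj z = w by case: z hz {hw} => [a /eqP|a].
have [k hk] := walk_n_contract attach_proj_contract hw.
by rewrite hzw => /gdist_le /leq_trans; apply.
Qed.

Lemma gdist_attach_inl_inr u h :
  gdist attach_graph (inl u) (inr h) = (gdist e w u).+1.
Proof. by rewrite gdist_sym ?gdist_attach_inr_inl //; exact: attach_graph_sym. Qed.

Lemma gdist_attach_inr h h' : gdist attach_graph (inr h) (inr h') =
  if h == h' then 0 else if multipartite_part h != multipartite_part h' then 1 else 2.
Proof.
case: (eqVneq h h') => [<-|hh]; first exact: gdist_refl.
have hh' : inr h != inr h' :> T + multipartite_vertex by rewrite (inj_eq inr_inj).
case: ifP => hp; first exact: gdist_adj.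
by apply: (gdist_common_neighbour (z := inl w)); rewrite //= ?hp ?eqxx.
Qed.

Variables (X : T -> R) (b : R).
Hypotheses (hX : forall u, \sum_g (gdist e u g)%:R * X g = 1)
  (hb : (m%:R - 2) * b = - (1 + \sum_g X g))
  (hbal : 1 + N%:R * (1 + \sum_g X g) + (c * m)%:R * b = 0).

Definition attach_weight (h : multipartite_vertex) :=
  if h is inl _ then 1 + \sum_g X g else b.

Definition attach_kernel (t : T + multipartite_vertex) :=
  match t with inl u => X u + (u == w)%:R | inr h => attach_weight h end.

Lemma attach_weight_sum : \sum_h attach_weight h = -1.
Proof.
rewrite big_sumType /= !sumr_const card_ord card_prod !card_ord.
by move/eqP: hbal; rewrite !mulr_natl -addrA addrC addr_eq0 => /eqP.
Qed.

Lemma attach_weight_same_part h :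
  \sum_h' attach_weight h' * (multipartite_part h' == multipartite_part h)%:R =
  if h is inl _ then 1 + \sum_g X g else m%:R * b.
Proof.
case: h => [i|[k l]]; rewrite big_sumType /=.
  rewrite [X in _ + X]big1 ?addr0 => [|p _]; last by rewrite gtn_eqF ?mulr0 // ltn_addr.
  under eq_bigr do rewrite (inj_eq val_inj).
  exact: (sumr_mul_eq (fun=> 1 + \sum_g X g)).
rewrite big1 ?add0r => [|i _]; last by rewrite ltn_eqF ?mulr0 // ltn_addr.
rewrite -(pair_bigA _ (fun (k' : 'I_c) (_ : 'I_m) => b * (N + k' == N + k)%:R)) /=.
rewrite -(sumr_mul_eq (fun=> m%:R * b) k); apply: eq_bigr => k' _.
rewrite eqn_add2l (inj_eq val_inj).
by rewrite -big_distrl /= sumr_const card_ord mulr_natl.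
Qed.

Lemma gdist_attach_inrE h' h : ((gdist attach_graph (inr h') (inr h))%:R : R) =
  1 + (multipartite_part h' == multipartite_part h)%:R - 2 * (h' == h)%:R.
Proof.
rewrite gdist_attach_inr; case: (eqVneq h' h) => [->|_]; rewrite ?eqxx /=; first lra.
by case: (_ == _) => /=; lra.
Qed.

Lemma attach_kernel_inl u :
  \sum_t attach_kernel t * (gdist attach_graph t (inl u))%:R = 0.
Proof.
rewrite big_sumType /=.
under eq_bigr do rewrite gdist_attach_inl mulrDl.
under [X in _ + X]eq_bigr do rewrite gdist_attach_inr_inl.
rewrite big_split /= -big_distrl /= attach_weight_sum.
have -> : \sum_g X g * (gdist e g u)%:R = 1.
  by rewrite -[RHS](hX u); apply: eq_bigr => g _; rewrite mulrC (gdist_sym hs).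
rewrite (eq_bigr (fun g => (gdist e g u)%:R * (g == w)%:R)) => [|g _]; last exact: mulrC.
by rewrite sumr_mul_eq (gdist_sym hs) -addn1 natrD; ring.
Qed.

Lemma attach_kernel_inr h :
  \sum_t attach_kernel t * (gdist attach_graph t (inr h))%:R = 0.
Proof.
rewrite big_sumType /=.
under eq_bigr do rewrite gdist_attach_inl_inr.
under [X in _ + X]eq_bigr do rewrite gdist_attach_inrE.
have -> : \sum_g (X g + (g == w)%:R) * ((gdist e w g).+1)%:R = 2 + \sum_g X g.
  transitivity (\sum_g (gdist e w g)%:R * X g + \sum_g X g +
                \sum_g ((gdist e w g).+1)%:R * (g == w)%:R).
    by rewrite -!big_split; apply: eq_bigr => g _ /=; rewrite -addn1 natrD; ring.
  by rewrite hX sumr_mul_eq gdist_refl; ring.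
under eq_bigr do rewrite mulrBr mulrDr mulr1 mulrCA.
rewrite sumrB big_split -mulr_sumr /= attach_weight_sum attach_weight_same_part.
rewrite sumr_mul_eq; case: h => [i|p] /=; first ring.
by move: hb; rewrite mulrBl; lra.
Qed.

Lemma attach_kernel_sum : \sum_t attach_kernel t = \sum_g X g.
Proof.
rewrite big_sumType /= attach_weight_sum big_split /=.
have -> : \sum_g ((g == w)%:R : R) = 1.
  by rewrite -[RHS](sumr_mul_eq (fun=> 1) w); apply: eq_bigr => g _; rewrite mul1r.
by rewrite addrK.
Qed.

Lemma attach_graph_exceptional : \sum_g X g != 0 -> distance_exceptional attach_graph.
Proof.
move=> hsum; apply: (distance_exceptional_from_kernel (Y := attach_kernel)).
  by case=> [u|h]; [exact: attach_kernel_inl | exact: attach_kernel_inr].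
by rewrite attach_kernel_sum.
Qed.

End Attach.

Lemma natr_absz_ge0 (z : int) : 0 <= z -> ((absz z)%:R : R) = z%:~R.
Proof. by move=> hz; rewrite natr_absz ger0_norm. Qed.

(* For [1/s = P/Q] with [Q > 0], [m = 2Q + 2] and [b = -s/2Q] give [c m b = -s c (Q+1)/Q], so
   the balance equation becomes [c (Q + 1) - N Q = P], solved by
   [c = P + |P| Q] and [N = P + |P| (Q + 1)]. *)
Lemma multipartite_balance (q : rat) : exists (N c m : nat) (b : R),
  (m%:R - 2) * b = - ratr q /\ 1 + N%:R * ratr q + (c * m)%:R * b = 0.
Proof.
have [->|q0] := eqVneq q 0.
  by exists 0%N, 1%N, 2%N, (- (1 / 2)); rewrite rmorph0; split; lra.
pose P := numq q^-1; pose Q := denq q^-1.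
have hQ : 0 < Q := denq_gt0 _.
have hQR : (Q%:~R : R) != 0 by rewrite intr_eq0 gt_eqF.
have hPQ : (ratr q : R) * P%:~R = Q%:~R.
  have -> : (P%:~R : R) = (ratr q)^-1 * Q%:~R.
    by rewrite -fmorphV /ratr divfK.
  by rewrite mulrA divff ?mul1r // fmorph_eq0.
have hN : 0 <= P + `|P| * (Q + 1) by nia.
have hc : 0 <= P + `|P| * Q by nia.
exists (absz (P + `|P| * (Q + 1))), (absz (P + `|P| * Q)), (2 * absz Q + 2)%N,
  (- ratr q / (2 * Q%:~R)).
rewrite natrM natrD natrM !natr_absz_ge0 ?(ltW hQ) // !(intrD, intrM).
move: hQR hPQ; set s := ratr q; set PR := P%:~R; set QR := Q%:~R.
set AR := (`|P|)%:~R => hQR hPQ; split; first by field.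
transitivity (1 - s * PR / QR); first by field.
by rewrite hPQ divff ?subrr.
Qed.

Lemma exceptional_extension (T : finType) (e : rel T) : simple_graph e ->
  exists (T'' : finType) (e'' : rel T'') (f : T -> T''),
    [/\ simple_graph e'', connected_graph e'', distance_exceptional e'',
        injective f & forall u v : T, e'' (f u) (f v) = e u v].
Proof.
case=> hs hi; exists (T + 'I_7)%type, (gadget_graph e), inl; split => //.
- by split; [exact: gadget_graph_sym | exact: gadget_graph_irr].
- exact: gadget_graph_connected.
- exact: gadget_graph_exceptional.
- exact: inl_inj.
Qed.

Lemma exceptional_isometric_extension (T : finType) (e : rel T) (x : 'cV[R]_#|T|) :
  simple_graph e -> connected_graph e -> curvature_potential e x -> \sum_i x i 0 != 0 ->
  exists (T'' : finType) (e'' : rel T'') (f : T -> T''),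
    [/\ simple_graph e'', connected_graph e'', distance_exceptional e'',
        injective f
      & forall u v : T, e'' (f u) (f v) = e u v /\
                        gdist e'' (f u) (f v) = gdist e u v].
Proof.
case=> hs hi hc hx hx0; pose X t := x (enum_rank t) 0.
have hsum : \sum_t X t = \sum_i x i 0 := sum_enum_rank x.
have [w _|hT] := pickP (@predT T); last first.
  by move: hx0; rewrite -hsum big1 ?eqxx // => t; have := hT t.
have [q hq] := curvature_potential_sum_rat hs hx.
have [N [c [m [b [hb hbal]]]]] := multipartite_balance (1 + q).
have hs1 : 1 + \sum_t X t = ratr (1 + q) by rewrite hsum hq rmorphD rmorph1.
rewrite -hs1 in hb hbal.
exists (T + multipartite_vertex N c m)%type, (@attach_graph T e w N c m), inl.
split => //.
- by split; [exact: attach_graph_sym | exact: attach_graph_irr].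
- exact: attach_graph_connected.
- by apply: (attach_graph_exceptional hs hc (curvature_potentialE hx) hb hbal); rewrite hsum.
- exact: inl_inj.
- by move=> u v; rewrite gdist_attach_inl.
Qed.

Theorem theorem5p3 (T : finType) (e : rel T) (hG : simple_graph e) :
  (exists (T'' : finType) (e'' : rel T'') (f : T -> T''),
      [/\ simple_graph e'', connected_graph e'', distance_exceptional e'',
          injective f & forall u v : T, e'' (f u) (f v) = e u v])
  /\
  (connected_graph e -> curvature_index_finite e ->
    exists (T'' : finType) (e'' : rel T'') (f : T -> T''),
      [/\ simple_graph e'', connected_graph e'', distance_exceptional e'',
          injective f
        & forall u v : T, e'' (f u) (f v) = e u v /\
                          gdist e'' (f u) (f v) = gdist e u v]).
Proof.
split; first exact: exceptional_extension.
move=> hc [he|[x [hx hx0]]]; first by exists T, e, id; split.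
exact: exceptional_isometric_extension hx hx0.
Qed.
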